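(* Let $R$ be an associative unital division ring over a field $F$ of characteristic $0$, $\lambda\in F$, and $v_{m,n}\in R$ invertible for all $(m,n)\in\mathbb{Z}^2$. Define $$\mathcal{L}_{m,n}=\begin{pmatrix}-v_{m,n}^{-1} & \lambda\\ 1 & -v_{m,n}\end{pmatrix},\qquad \mathcal{M}_{m,n}=\begin{pmatrix}v_{m+1,n}-v_{m,n}^{-1} & \lambda\\ 1 & 0\end{pmatrix}.$$ If the compatibility condition $\mathcal{L}_{m+1,n}\mathcal{M}_{m,n}=\mathcal{M}_{m,n+1}\mathcal{L}_{m,n}$ of the system $\Psi_{m,n+1}=\mathcal{L}_{m,n}\Psi_{m,n}$, $\Psi_{m+1,n}=\mathcal{M}_{m,n}\Psi_{m,n}$ holds for all $(m,n)$, then for all $(m,n)$ $$v_{m+1,n+1}-v_{m,n}=v_{m,n+1}^{-1}-v_{m+1,n}^{-1}.$$ *)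

From HB Require Import structures.
From mathcomp Require Import all_boot all_order all_algebra.
Set Implicit Arguments. Unset Strict Implicit. Unset Printing Implicit Defensive.
Import Order.TTheory GRing.Theory Num.Theory.
Local Open Scope ring_scope.

Definition mx2 (R : pzRingType) (a b c d : R) : 'M[R]_2 :=
  \matrix_(i < 2, j < 2)
    if (i : nat) == 0%N then (if (j : nat) == 0%N then a else b)
    else (if (j : nat) == 0%N then c else d).

Definition Lmat (F : fieldType) (R : unitAlgType F) (lam : F) (v : int -> int -> R)
  (m n : int) : 'M[R]_2 :=
  mx2 (- (v m n)^-1) (lam%:A) 1 (- v m n).

Definition Mmat (F : fieldType) (R : unitAlgType F) (lam : F) (v : int -> int -> R)
  (m n : int) : 'M[R]_2 :=
  mx2 (v (m + 1) n - (v m n)^-1) (lam%:A) 1 0.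

From HB Require Import structures.
From mathcomp Require Import all_boot all_order all_algebra.
Import Order.TTheory GRing.Theory Num.Theory.
Local Open Scope ring_scope.

(* Only the (0,0) entry of the compatibility condition is needed: the spectral
   parameter lambda cancels from it, and right multiplication by v_{m,n} turns
   it into the lattice equation. *)

Lemma mx2_mulmx (R : pzRingType) (a b c d a' b' c' d' : R) :
  mx2 a b c d *m mx2 a' b' c' d' =
  mx2 (a * a' + b * c') (a * b' + b * d') (c * a' + d * c') (c * b' + d * d').
Proof.
by apply/matrixP=> i j; rewrite !mxE !big_ord_recr big_ord0 /= !mxE add0r;
  case: i j => [[|[|//]] ?] [[|[|//]] ?].
Qed.

Lemma mx2_00 (R : pzRingType) (a b c d : R) : mx2 a b c d 0 0 = a.
Proof. by rewrite mxE. Qed.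

Lemma lattice_eq_of_corner (R : unitRingType) (x y z w : R) :
  x \is a GRing.unit -> y \is a GRing.unit ->
  - x^-1 * (x - y^-1) = (z - w^-1) * - y^-1 ->
  z - y = w^-1 - x^-1.
Proof.
move=> ux uy.
have -> : - x^-1 * (x - y^-1) = (x^-1 - y) * y^-1.
  by rewrite mulNr mulrBl mulrBr mulVr // divrr // opprB.
rewrite mulrN -mulNr opprB => /(congr1 (fun t => t * y)).
rewrite !divrK // => eq_xw.
by rewrite -[w^-1](subrK z) -eq_xw addrAC [_ - x^-1]addrAC subrr add0r addrC.
Qed.

Theorem proposition5p1 (F : fieldType) (R : unitAlgType F)
  (R_division : forall x : R, x != 0 -> x \is a GRing.unit)
  (F_char0 : [pchar F] =i pred0)
  (lam : F) (v : int -> int -> R)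
  (v_unit : forall m n : int, v m n \is a GRing.unit)
  (compat : forall m n : int,
     Lmat lam v (m + 1) n *m Mmat lam v m n = Mmat lam v m (n + 1) *m Lmat lam v m n) :
  forall m n : int,
    v (m + 1) (n + 1) - v m n = (v m (n + 1))^-1 - (v (m + 1) n)^-1.
Proof.
move=> m n; apply: lattice_eq_of_corner (v_unit (m + 1) n) (v_unit m n) _.
apply: (addIr lam%:A).
have := congr1 (fun A : 'M[R]_2 => A 0 0) (compat m n).
by rewrite /Lmat /Mmat !mx2_mulmx !mx2_00 !mulr1.
Qed.
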